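(* Let $X$ be a (possibly large) category with a strict initial object $\mathsf{0}$, and let $L:\mathbf{Cat}\to\mathbf{Cat}/\!/X$ be the functor $L(W)=(W,\underline{\mathsf{0}})$, $L(f)=(f,\iota)$. If $p:E\to B$ is a functor between small categories such that $L(p)$ is an effective descent morphism in $\mathbf{Cat}/\!/X$, then $p$ is an effective descent morphism in $\mathbf{Cat}$.
   Context: $\mathbf{Cat}$ denotes the category of small categories and functors. For a (possibly large) category $X$, the lax comma category $\mathbf{Cat}/\!/X$ has as objects pairs $(W,a)$ with $W$ a small category and $a:W\to X$ a functor; a morphism $(f,\gamma):(W,a)\to(Y,b)$ consists of a functor $f:W\to Y$ and a natural transformation $\gamma:a\Rightarrow b\circ f$. The composite of $(f,\gamma):(W,a)\to(Y,b)$ and $(g,\chi):(Y,b)\to(Z,c)$ is $(g\circ f,(\chi * f)\cdot\gamma)$, where $(\chi * f)_w=\chi_{f(w)}$, and the identity on $(W,a)$ is $(\mathrm{id}_W,\mathrm{id}_a)$. An initial object $\mathsf{0}$ is strict if every morphism $x\to\mathsf{0}$ in $X$ is an isomorphism. $\underline{\mathsf{0}}:W\to X$ denotes the functor constant at $\mathsf{0}$, and for a functor $f:W\to Y$, $\iota:\underline{\mathsf{0}}\Rightarrow\underline{\mathsf{0}}\circ f$ is the unique natural transformation. A morphism $q:u\to v$ in a category $\mathcal{C}$ is an effective descent morphism if pullbacks along $q$ exist in $\mathcal{C}$ and the change-of-base (pullback) functor $q^*:\mathcal{C}/v\to\mathcal{C}/u$ is monadic. *)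

From Stdlib Require Import ProofIrrelevance FunctionalExtensionality.
Set Universe Polymorphism.
Set Primitive Projections.
Set Implicit Arguments.
Unset Strict Implicit.

(** * Categories (hom-types with Leibniz equality of morphisms) *)
Record Category := Build_Category {
  ob : Type;
  hom : ob -> ob -> Type;
  idm : forall a, hom a a;
  cmp : forall a b c, hom b c -> hom a b -> hom a c;
  cmp_idl : forall a b (f : hom a b), cmp (idm b) f = f;
  cmp_idr : forall a b (f : hom a b), cmp f (idm a) = f;
  cmp_assoc : forall a b c d (f : hom a b) (g : hom b c) (h : hom c d),
      cmp h (cmp g f) = cmp (cmp h g) f }.
Coercion ob : Category >-> Sortclass.
Arguments hom : clear implicits.
Arguments idm {C} a : rename.
Arguments cmp {C a b c} g f : rename.
Arguments cmp_idl {C a b} f : rename.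
Arguments cmp_idr {C a b} f : rename.
Arguments cmp_assoc {C a b c d} f g h : rename.

Definition is_iso (C : Category) (a b : C) (f : hom C a b) : Prop :=
  exists g : hom C b a, cmp g f = idm a /\ cmp f g = idm b.

Record Functor (C D : Category) := Build_Functor {
  fobj : C -> D;
  fmap : forall a b, hom C a b -> hom D (fobj a) (fobj b);
  fmap_id : forall a, fmap (idm a) = idm (fobj a);
  fmap_cmp : forall a b c (f : hom C a b) (g : hom C b c),
     fmap (cmp g f) = cmp (fmap g) (fmap f) }.
Arguments Build_Functor C D fobj fmap fmap_id fmap_cmp : clear implicits.
Arguments fobj {C D} F a : rename.
Arguments fmap {C D} F {a b} f : rename.
Arguments fmap_id {C D} F a : rename.
Arguments fmap_cmp {C D} F {a b c} f g : rename.
Coercion fobj : Functor >-> Funclass.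

Definition Fid (C : Category) : Functor C C :=
  Build_Functor C C (fun a => a) (fun a b f => f)
    (fun a => eq_refl) (fun a b c f g => eq_refl).

Definition Fcomp (C D E : Category) (G : Functor D E) (F : Functor C D) : Functor C E.
Proof.
  refine (Build_Functor C E (fun a => G (F a)) (fun a b f => fmap G (fmap F f)) _ _).
  - intro a; rewrite fmap_id; apply fmap_id.
  - intros; rewrite fmap_cmp; apply fmap_cmp.
Defined.

Lemma functor_eq_same C D o m p1 p2 q1 q2 :
  Build_Functor C D o m p1 p2 = Build_Functor C D o m q1 q2.
Proof. rewrite (proof_irrelevance _ p1 q1), (proof_irrelevance _ p2 q2). reflexivity. Qed.

Definition Cat : Category.
Proof.
  refine (@Build_Category Category (fun C D => Functor C D) Fid
            (fun C D E G F => Fcomp G F) _ _ _).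
  - intros a b f; destruct f; apply functor_eq_same.
  - intros a b f; destruct f; apply functor_eq_same.
  - intros; apply functor_eq_same.
Defined.

Record NT (C D : Category) (F G : Functor C D) := Build_NT {
  ntc : forall a, hom D (F a) (G a);
  ntn : forall a b (f : hom C a b), cmp (fmap G f) (ntc a) = cmp (ntc b) (fmap F f) }.
Arguments Build_NT {C D F G} ntc ntn.
Arguments ntc {C D F G} t a : rename.
Arguments ntn {C D F G} t {a b} f : rename.

Lemma nt_eq C D (F G : Functor C D) (s t : NT F G) :
  (forall a, ntc s a = ntc t a) -> s = t.
Proof.
  destruct s as [s1 s2], t as [t1 t2]; simpl; intro H.
  assert (s1 = t1) by (apply functional_extensionality_dep; exact H). subst t1.
  rewrite (proof_irrelevance _ s2 t2). reflexivity.
Qed.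

(** * The lax comma category Cat//X *)
Record LObj (X : Category) := Build_LObj { lW : Category; la : Functor lW X }.
Arguments Build_LObj {X} lW la.
Record LHom (X : Category) (A B : LObj X) := Build_LHom {
  lf : Functor (lW A) (lW B);
  lg : NT (la A) (Fcomp (la B) lf) }.
Arguments Build_LHom {X A B} lf lg.
Arguments lf {X A B} h : rename.
Arguments lg {X A B} h : rename.

Definition lid (X : Category) (A : LObj X) : LHom A A.
Proof.
  refine (Build_LHom (Fid _) (@Build_NT _ _ (la A) (Fcomp (la A) (Fid _))
            (fun w => idm (la A w)) _)).
  intros a b f; cbn. rewrite cmp_idl, cmp_idr. reflexivity.
Defined.

Definition lcomp (X : Category) (A B C : LObj X) (G : LHom B C) (F : LHom A B) : LHom A C.
Proof.
  refine (Build_LHom (Fcomp (lf G) (lf F))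
            (@Build_NT _ _ (la A) (Fcomp (la C) (Fcomp (lf G) (lf F)))
               (fun w => cmp (ntc (lg G) (lf F w)) (ntc (lg F) w)) _)).
  intros a b f; cbn.
  pose proof (ntn (lg G) (fmap (lf F) f)) as H1.
  pose proof (ntn (lg F) f) as H2. cbn in H1, H2.
  rewrite cmp_assoc, H1, <- cmp_assoc, H2, cmp_assoc. reflexivity.
Defined.

Lemma lhom_eq (X : Category) (A B : LObj X) o m p1 p2 q1 q2
  (g1 : NT (la A) (Fcomp (la B) (Build_Functor _ _ o m p1 p2)))
  (g2 : NT (la A) (Fcomp (la B) (Build_Functor _ _ o m q1 q2))) :
  (forall w, ntc g1 w = ntc g2 w) ->
  @Build_LHom X A B (Build_Functor _ _ o m p1 p2) g1
  = @Build_LHom X A B (Build_Functor _ _ o m q1 q2) g2.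
Proof.
  intro H.
  assert (p1 = q1) by apply proof_irrelevance.
  assert (p2 = q2) by apply proof_irrelevance.
  subst q1 q2. f_equal. apply nt_eq. exact H.
Qed.

Definition CatLax (X : Category) : Category.
Proof.
  refine (@Build_Category (LObj X) (@LHom X) (@lid X) (@lcomp X) _ _ _).
  - intros a b [[o m p q] g].
    apply lhom_eq; intro w; cbn; apply cmp_idl.
  - intros a b [[o m p q] g].
    apply lhom_eq; intro w; cbn; apply cmp_idr.
  - intros a b c d [[o1 m1 p1 q1] g1] [[o2 m2 p2 q2] g2] [[o3 m3 p3 q3] g3].
    apply lhom_eq; intro w; cbn; apply cmp_assoc.
Defined.

Lemma sig_eq_pi (A : Type) (P : A -> Prop) (x y : sig P) :
  proj1_sig x = proj1_sig y -> x = y.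
Proof. destruct x, y; simpl; intro; subst; f_equal; apply proof_irrelevance. Qed.

Record SObj (C : Category) (v : C) := Build_SObj { sdom : C; sarr : hom C sdom v }.
Arguments Build_SObj {C v} sdom sarr.
Arguments sdom {C v} x : rename.
Arguments sarr {C v} x : rename.
Definition SHom (C : Category) (v : C) (x y : SObj v) :=
  { h : hom C (sdom x) (sdom y) | cmp (sarr y) h = sarr x }.

Lemma scomp_pf (C : Category) (v : C) (x y z : SObj v) (g : SHom y z) (f : SHom x y) :
  cmp (sarr z) (cmp (proj1_sig g) (proj1_sig f)) = sarr x.
Proof. rewrite cmp_assoc, (proj2_sig g), (proj2_sig f). reflexivity. Qed.

Definition Slice (C : Category) (v : C) : Category.
Proof.
  refine (@Build_Category (SObj v) (@SHom C v)
            (fun x => exist _ (idm (sdom x)) (cmp_idr _))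
            (fun x y z g f => exist _ (cmp (proj1_sig g) (proj1_sig f)) (scomp_pf g f))
            _ _ _).
  - intros; apply sig_eq_pi; apply cmp_idl.
  - intros; apply sig_eq_pi; apply cmp_idr.
  - intros; apply sig_eq_pi; apply cmp_assoc.
Defined.

Record PullbacksAlong (C : Category) (u v : C) (q : hom C u v) := {
  pb_ob : forall w, hom C w v -> C;
  pb_pr1 : forall w (g : hom C w v), hom C (pb_ob g) u;
  pb_pr2 : forall w (g : hom C w v), hom C (pb_ob g) w;
  pb_sq : forall w (g : hom C w v), cmp q (pb_pr1 g) = cmp g (pb_pr2 g);
  pb_lift : forall w (g : hom C w v) z (x : hom C z u) (y : hom C z w),
      cmp q x = cmp g y -> hom C z (pb_ob g);
  pb_lift1 : forall w (g : hom C w v) z (x : hom C z u) (y : hom C z w)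
      (e : cmp q x = cmp g y), cmp (pb_pr1 g) (pb_lift e) = x;
  pb_lift2 : forall w (g : hom C w v) z (x : hom C z u) (y : hom C z w)
      (e : cmp q x = cmp g y), cmp (pb_pr2 g) (pb_lift e) = y;
  pb_uniq : forall w (g : hom C w v) z (k k' : hom C z (pb_ob g)),
      cmp (pb_pr1 g) k = cmp (pb_pr1 g) k' ->
      cmp (pb_pr2 g) k = cmp (pb_pr2 g) k' -> k = k' }.
Arguments pb_ob {C u v q} P {w} g : rename.
Arguments pb_pr1 {C u v q} P {w} g : rename.
Arguments pb_pr2 {C u v q} P {w} g : rename.
Arguments pb_sq {C u v q} P {w} g : rename.
Arguments pb_lift {C u v q} P {w} g {z} x y e : rename.
Arguments pb_lift1 {C u v q} P {w} g {z} x y e : rename.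
Arguments pb_lift2 {C u v q} P {w} g {z} x y e : rename.
Arguments pb_uniq {C u v q} P {w} g {z} k k' _ _ : rename.

Section PullbackFunctor.
Context (C : Category) (u v : C) (q : hom C u v) (P : PullbacksAlong q).

Lemma pbf_eq (x y : SObj v) (h : SHom x y) :
  cmp q (pb_pr1 P (sarr x)) = cmp (sarr y) (cmp (proj1_sig h) (pb_pr2 P (sarr x))).
Proof. rewrite pb_sq, cmp_assoc, (proj2_sig h). reflexivity. Qed.

Definition pbf_map (x y : SObj v) (h : SHom x y) :
  @SHom C u (Build_SObj (pb_ob P (sarr x)) (pb_pr1 P (sarr x)))
            (Build_SObj (pb_ob P (sarr y)) (pb_pr1 P (sarr y))) :=
  exist _ (pb_lift P (sarr y) _ _ (pbf_eq h)) (pb_lift1 _ _ _ _ _).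

Lemma pbf_lift1 (x y : SObj v) (h : SHom x y) :
  cmp (pb_pr1 P (sarr y)) (proj1_sig (pbf_map h)) = pb_pr1 P (sarr x).
Proof. apply pb_lift1. Qed.

Lemma pbf_lift2 (x y : SObj v) (h : SHom x y) :
  cmp (pb_pr2 P (sarr y)) (proj1_sig (pbf_map h)) = cmp (proj1_sig h) (pb_pr2 P (sarr x)).
Proof. apply pb_lift2. Qed.

Definition pbfun : Functor (Slice v) (Slice u).
Proof.
  refine (Build_Functor (Slice v) (Slice u)
            (fun x => Build_SObj (pb_ob P (sarr x)) (pb_pr1 P (sarr x)))
            pbf_map _ _).
  - intro a; apply sig_eq_pi.
    change (proj1_sig (pbf_map (idm a)) = idm (pb_ob P (sarr a))).
    apply (pb_uniq P (sarr a)).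
    + rewrite pbf_lift1, cmp_idr. reflexivity.
    + rewrite pbf_lift2, cmp_idr. apply cmp_idl.
  - intros a b c f g; apply sig_eq_pi.
    change (proj1_sig (pbf_map (cmp g f))
            = cmp (proj1_sig (pbf_map g)) (proj1_sig (pbf_map f))).
    apply (pb_uniq P (sarr c)).
    + rewrite pbf_lift1, cmp_assoc, pbf_lift1. symmetry; apply pbf_lift1.
    + rewrite pbf_lift2, cmp_assoc, pbf_lift2, <- (cmp_assoc (proj1_sig (pbf_map f))).
      etransitivity;
        [| apply (f_equal (fun k => cmp (proj1_sig g) k)); symmetry; apply pbf_lift2].
      symmetry; apply cmp_assoc.
Defined.
End PullbackFunctor.
Arguments pbfun {C u v q} P.

Record LeftAdjoint (C D : Category) (U : Functor C D) := {
  ladj : Functor D C;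
  adj_unit : NT (Fid D) (Fcomp U ladj);
  adj_counit : NT (Fcomp ladj U) (Fid C);
  adj_tri1 : forall d, cmp (ntc adj_counit (ladj d)) (fmap ladj (ntc adj_unit d))
                       = idm (ladj d);
  adj_tri2 : forall c, cmp (fmap U (ntc adj_counit c)) (ntc adj_unit (U c))
                       = idm (U c) }.
Arguments ladj {C D U} A : rename.
Arguments adj_unit {C D U} A : rename.
Arguments adj_counit {C D U} A : rename.
Arguments adj_tri2 {C D U} A c : rename.

Section EM.
Context (C D : Category) (U : Functor C D) (A : LeftAdjoint U).
Local Notation F := (ladj A).
Local Notation eta := (adj_unit A).
Local Notation eps := (adj_counit A).

(** Algebras for the monad T = U F with unit eta and multiplication U eps F *)
Record Alg := Build_Alg {
  acar : D;
  aact : hom D (U (F acar)) acar;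
  alg_unit : cmp aact (ntc eta acar) = idm acar;
  alg_assoc : cmp aact (fmap U (fmap F aact)) = cmp aact (fmap U (ntc eps (F acar))) }.

Definition AlgHom (x y : Alg) :=
  { m : hom D (acar x) (acar y) | cmp m (aact x) = cmp (aact y) (fmap U (fmap F m)) }.

Lemma em_id_pf (x : Alg) :
  cmp (idm (acar x)) (aact x) = cmp (aact x) (fmap U (fmap F (idm (acar x)))).
Proof. rewrite !fmap_id, cmp_idl, cmp_idr. reflexivity. Qed.

Lemma em_comp_pf (x y z : Alg) (g : AlgHom y z) (f : AlgHom x y) :
  cmp (cmp (proj1_sig g) (proj1_sig f)) (aact x)
  = cmp (aact z) (fmap U (fmap F (cmp (proj1_sig g) (proj1_sig f)))).
Proof.
  rewrite <- cmp_assoc, (proj2_sig f), cmp_assoc, (proj2_sig g), <- cmp_assoc,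
    <- !fmap_cmp. reflexivity.
Qed.

Definition EMcat : Category.
Proof.
  refine (@Build_Category Alg AlgHom
            (fun x => exist _ (idm (acar x)) (em_id_pf x))
            (fun x y z g f => exist _ (cmp (proj1_sig g) (proj1_sig f)) (em_comp_pf g f))
            _ _ _).
  - intros; apply sig_eq_pi; apply cmp_idl.
  - intros; apply sig_eq_pi; apply cmp_idr.
  - intros; apply sig_eq_pi; apply cmp_assoc.
Defined.

Lemma cmpK_assoc (c : C) :
  cmp (fmap U (ntc eps c)) (fmap U (fmap F (fmap U (ntc eps c))))
  = cmp (fmap U (ntc eps c)) (fmap U (ntc eps (F (U c)))).
Proof.
  rewrite <- !fmap_cmp. f_equal.
  pose proof (ntn eps (ntc eps c)) as H. cbn in H. symmetry; exact H.
Qed.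

Lemma cmpK_hom (c c' : C) (m : hom C c c') :
  cmp (fmap U m) (fmap U (ntc eps c))
  = cmp (fmap U (ntc eps c')) (fmap U (fmap F (fmap U m))).
Proof.
  rewrite <- !fmap_cmp. f_equal. pose proof (ntn eps m) as H. cbn in H. exact H.
Qed.

Definition comparison : Functor C EMcat.
Proof.
  refine (Build_Functor C EMcat
            (fun c => @Build_Alg (U c) (fmap U (ntc eps c)) (adj_tri2 A c) (cmpK_assoc c))
            (fun c c' m => exist _ (fmap U m) (cmpK_hom m)) _ _).
  - intro a; apply sig_eq_pi; cbn; apply fmap_id.
  - intros; apply sig_eq_pi; cbn; apply fmap_cmp.
Defined.
End EM.
Arguments comparison {C D U} A.

Definition is_equivalence (C D : Category) (K : Functor C D) : Prop :=
  exists (G : Functor D C) (al : NT (Fcomp K G) (Fid D)) (be : NT (Fcomp G K) (Fid C)),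
    (forall d, is_iso (ntc al d)) /\ (forall c, is_iso (ntc be c)).

Definition monadic (C D : Category) (U : Functor C D) : Prop :=
  exists A : LeftAdjoint U, is_equivalence (comparison A).

Definition effective_descent (C : Category) (u v : C) (q : hom C u v) : Prop :=
  exists P : PullbacksAlong q, monadic (pbfun P).

Definition is_initial (C : Category) (z : C) : Prop :=
  forall x : C, exists f : hom C z x, forall g : hom C z x, g = f.
Definition is_strict_initial (C : Category) (z : C) : Prop :=
  is_initial z /\ forall (x : C) (f : hom C x z), is_iso f.

Definition constF (W X : Category) (z : X) : Functor W X :=
  Build_Functor W X (fun _ => z) (fun _ _ _ => idm z)
    (fun _ => eq_refl) (fun _ _ _ _ _ => eq_sym (cmp_idl (idm z))).

Definition Lobj (X : Category) (z : X) (W : Category) : ob (CatLax X) :=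
  Build_LObj W (constF W z).

Definition Lmor (X : Category) (z : X) (E B : Category) (p : Functor E B)
  : hom (CatLax X) (Lobj z E) (Lobj z B) :=
  @Build_LHom X (Lobj z E) (Lobj z B) p
    (@Build_NT _ _ (constF E z) (Fcomp (constF B z) p) (fun _ => idm z)
       (fun _ _ _ => eq_refl)).

(* A morphism from (W', a) to L(W) in Cat//X is a natural transformation a => 0 with
   components into the strict initial object 0, so every label a(w) of an object over
   L(W) is itself initial. Hence forgetting the labels is an equivalence
   (Cat//X)/L(W) ~ Cat/W with inverse s |-> L(s); pullbacks along L(p) therefore give
   pullbacks along p in Cat, and p^* = forget o L(p)^* o L. Finally, monadicity is stable
   under composing with equivalences on either side: the left adjoint is transported
   along the equivalence, the transported monad is conjugate to the original one, and
   algebras and their morphisms correspond, so the comparison functor stays fully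
   faithful and essentially surjective. *)

From Stdlib Require Import ProofIrrelevance FunctionalExtensionality ClassicalEpsilon.
Set Universe Polymorphism.
Set Implicit Arguments.
Unset Strict Implicit.

Ltac assoc_r := repeat rewrite <- cmp_assoc.
Ltac assoc_l := repeat rewrite cmp_assoc.

Lemma cmp_assoc_eq (C : Category) (a b c d : C) (f : hom C a b) (g : hom C b c)
  (k : hom C a c) (r : hom C c d) :
  cmp g f = k -> cmp (cmp r g) f = cmp r k.
Proof. intro e; rewrite <- cmp_assoc, e; reflexivity. Qed.

Lemma split_epi_cancel (C : Category) (a b c : C) (f : hom C a b) (g : hom C b a)
  (x y : hom C b c) :
  cmp f g = idm b -> cmp x f = cmp y f -> x = y.
Proof.
  intros fg e. rewrite <- (cmp_idr x), <- (cmp_idr y), <- fg, !cmp_assoc, e. reflexivity.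
Qed.

Lemma cmp_inverse (C : Category) (a b c : C) (f1 : hom C a b) (g1 : hom C b a)
  (f2 : hom C b c) (g2 : hom C c b) :
  cmp g1 f1 = idm a -> cmp g2 f2 = idm b -> cmp (cmp g1 g2) (cmp f2 f1) = idm a.
Proof.
  intros e1 e2. rewrite <- cmp_assoc, (cmp_assoc f1 f2 g2), e2, cmp_idl. exact e1.
Qed.

Lemma fmap_inverse (C D : Category) (K : Functor C D) (a b : C) (f : hom C a b)
  (g : hom C b a) :
  cmp g f = idm a -> cmp (fmap K g) (fmap K f) = idm (K a).
Proof. intro e; rewrite <- fmap_cmp, e; apply fmap_id. Qed.

Section Adjunction.
Context (C D : Category) (U : Functor C D) (A : LeftAdjoint U).
Local Notation F := (ladj A).
Local Notation eta := (adj_unit A).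
Local Notation eps := (adj_counit A).

(* The casts fix the implicit object arguments of [cmp] and [fmap] to their reduced
   forms, so that these equations rewrite in goals that have been simplified by [cbn]. *)

Lemma adj_transpose_unit d c (g : hom D d (U c)) :
  cmp (fmap U (cmp (ntc eps c : hom C (F (U c)) c) (fmap F g)))
      (ntc eta d : hom D d (U (F d))) = g.
Proof.
  cbn. rewrite fmap_cmp. assoc_r.
  pose proof (ntn eta g) as n; cbn in n. rewrite n, cmp_assoc.
  pose proof (adj_tri2 A c) as t; cbn in t. rewrite t. apply cmp_idl.
Qed.

Lemma adj_transpose_counit d c (h : hom C (F d) c) :
  cmp (ntc eps c : hom C (F (U c)) c) (fmap F (cmp (fmap U h) (ntc eta d : hom D d (U (F d)))))
  = h.
Proof.
  cbn. rewrite fmap_cmp, cmp_assoc.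
  pose proof (ntn eps h) as n; cbn in n. rewrite <- n. assoc_r.
  pose proof (adj_tri1 A d) as t; cbn in t. rewrite t. apply cmp_idr.
Qed.

Lemma adj_transpose_inj d c (h1 h2 : hom C (F d) c) :
  cmp (fmap U h1) (ntc eta d : hom D d (U (F d)))
  = cmp (fmap U h2) (ntc eta d : hom D d (U (F d))) -> h1 = h2.
Proof.
  intro e. rewrite <- (adj_transpose_counit h1), <- (adj_transpose_counit h2), e.
  reflexivity.
Qed.

Lemma counit_natural_U (c c' : C) (h : hom C c c') :
  cmp (fmap U h) (fmap U (ntc eps c : hom C (F (U c)) c))
  = cmp (fmap U (ntc eps c' : hom C (F (U c')) c')) (fmap U (fmap F (fmap U h))).
Proof. rewrite <- !fmap_cmp. f_equal. pose proof (ntn eps h) as n; exact n. Qed.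
End Adjunction.
Arguments adj_transpose_inj {C D U} A {d c} h1 h2 _.
Arguments counit_natural_U {C D U} A {c c'} h.

Section UniversalArrows.
Context (C D : Category) (U : Functor C D) (Fo : D -> C)
  (eta : forall d, hom D d (U (Fo d)))
  (transpose : forall d c, hom D d (U c) -> hom C (Fo d) c)
  (transpose_spec : forall d c (g : hom D d (U c)),
      cmp (fmap U (transpose d c g)) (eta d) = g)
  (transpose_inj : forall d c (h1 h2 : hom C (Fo d) c),
      cmp (fmap U h1) (eta d) = cmp (fmap U h2) (eta d) -> h1 = h2).

Definition universal_functor : Functor D C.
Proof.
  refine (Build_Functor D C Fo (fun a b m => @transpose _ _ (cmp (eta b) m)) _ _).
  - intro a. apply transpose_inj.
    rewrite transpose_spec, fmap_id, cmp_idl, cmp_idr. reflexivity.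
  - intros a b c f g. apply transpose_inj.
    rewrite transpose_spec, fmap_cmp. assoc_r.
    rewrite transpose_spec, !cmp_assoc, transpose_spec. reflexivity.
Defined.

Definition universal_unit : NT (Fid D) (Fcomp U universal_functor) :=
  @Build_NT _ _ (Fid D) (Fcomp U universal_functor) eta
    (fun a b m => transpose_spec (cmp (eta b) m)).

Definition universal_counit : NT (Fcomp universal_functor U) (Fid C).
Proof.
  refine (@Build_NT _ _ (Fcomp universal_functor U) (Fid C)
            (fun c => @transpose _ _ (idm (U c))) _).
  intros a b h; cbn. apply transpose_inj. rewrite !fmap_cmp. assoc_r.
  rewrite transpose_spec, cmp_idr, transpose_spec, cmp_assoc, transpose_spec.
  symmetry; apply cmp_idl.
Defined.

Definition adjoint_of_universal_arrows : LeftAdjoint U.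
Proof.
  refine {| ladj := universal_functor; adj_unit := universal_unit;
            adj_counit := universal_counit |}.
  - intro d; cbn. apply transpose_inj. rewrite fmap_cmp. assoc_r.
    rewrite transpose_spec, cmp_assoc, transpose_spec, cmp_idl, fmap_id, cmp_idl.
    reflexivity.
  - intro c; cbn. apply transpose_spec.
Defined.
End UniversalArrows.

Lemma em_iso_of_inverse (C D : Category) (U : Functor C D) (A : LeftAdjoint U)
  (x y : Alg A) (m : AlgHom x y) (n : hom D (acar y) (acar x)) :
  cmp n (proj1_sig m) = idm _ -> cmp (proj1_sig m) n = idm _ -> @is_iso (EMcat A) x y m.
Proof.
  intros nm mn.
  assert (n_alg : cmp n (aact y) = cmp (aact x) (fmap U (fmap (ladj A) n))).
  { transitivity (cmp n (cmp (aact y) (fmap U (fmap (ladj A) (cmp (proj1_sig m) n))))).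
    { rewrite mn, !fmap_id, cmp_idr. reflexivity. }
    rewrite !fmap_cmp. assoc_l.
    rewrite <- (cmp_assoc (fmap U (fmap (ladj A) (proj1_sig m))) (aact y) n).
    rewrite <- (proj2_sig m). assoc_l. rewrite nm, cmp_idl. reflexivity. }
  exists (exist _ n n_alg). split; apply sig_eq_pi; assumption.
Qed.

Definition fully_faithful (C D : Category) (K : Functor C D) : Prop :=
  forall a b (m : hom D (K a) (K b)), exists! f : hom C a b, fmap K f = m.
Definition ess_surj (C D : Category) (K : Functor C D) : Prop :=
  forall d : D, exists (c : C) (f : hom D (K c) d), is_iso f.

Record EquivalenceData (C D : Category) (K : Functor C D) := {
  ed_lift : forall a b, hom D (K a) (K b) -> hom C a b;
  ed_lift_spec : forall a b (g : hom D (K a) (K b)), fmap K (ed_lift g) = g;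
  ed_faithful : forall a b (f g : hom C a b), fmap K f = fmap K g -> f = g;
  ed_ob : D -> C;
  ed_counit : forall d, hom D (K (ed_ob d)) d;
  ed_counit_inv : forall d, hom D d (K (ed_ob d));
  ed_counit_inv_r : forall d, cmp (ed_counit d) (ed_counit_inv d) = idm d;
  ed_counit_inv_l : forall d, cmp (ed_counit_inv d) (ed_counit d) = idm _ }.
Arguments ed_lift {C D K} Kd {a b} g : rename.
Arguments ed_lift_spec {C D K} Kd {a b} g : rename.
Arguments ed_faithful {C D K} Kd {a b} f g _ : rename.
Arguments ed_ob {C D K} Kd d : rename.
Arguments ed_counit {C D K} Kd d : rename.
Arguments ed_counit_inv {C D K} Kd d : rename.
Arguments ed_counit_inv_r {C D K} Kd d : rename.
Arguments ed_counit_inv_l {C D K} Kd d : rename.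

Section EquivalenceDataTheory.
Context (C D : Category) (K : Functor C D) (Kd : EquivalenceData K).

Lemma ed_lift_cmp (a b c : C) (g1 : hom D (K a) (K b)) (g2 : hom D (K b) (K c)) :
  ed_lift Kd (cmp g2 g1) = cmp (ed_lift Kd g2) (ed_lift Kd g1).
Proof. apply (ed_faithful Kd). rewrite fmap_cmp, !ed_lift_spec. reflexivity. Qed.

Lemma ed_lift_fmap (a b : C) (f : hom C a b) : ed_lift Kd (fmap K f) = f.
Proof. apply (ed_faithful Kd). apply ed_lift_spec. Qed.

Lemma ed_lift_id (a : C) : ed_lift Kd (idm (K a)) = idm a.
Proof. rewrite <- fmap_id. apply ed_lift_fmap. Qed.

Lemma ed_lift_counit_inv (x : C) :
  cmp (ed_lift Kd (ed_counit Kd (K x))) (ed_lift Kd (ed_counit_inv Kd (K x))) = idm x.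
Proof. rewrite <- ed_lift_cmp, ed_counit_inv_r. apply ed_lift_id. Qed.

Lemma ed_lift_conj (a b : C) (m : hom D (K a) (K b)) :
  cmp (ed_lift Kd (ed_counit Kd (K b)))
      (ed_lift Kd (cmp (ed_counit_inv Kd (K b)) (cmp m (ed_counit Kd (K a)))))
  = cmp (ed_lift Kd m) (ed_lift Kd (ed_counit Kd (K a))).
Proof.
  apply (ed_faithful Kd). rewrite !fmap_cmp, !ed_lift_spec. assoc_l.
  rewrite ed_counit_inv_r, cmp_idl. reflexivity.
Qed.

Definition ed_inverse : Functor D C.
Proof.
  refine (Build_Functor D C (ed_ob Kd)
            (fun a b m => ed_lift Kd (cmp (ed_counit_inv Kd b) (cmp m (ed_counit Kd a))))
            _ _).
  - intro a. apply (ed_faithful Kd).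
    rewrite ed_lift_spec, fmap_id, cmp_idl, ed_counit_inv_l. reflexivity.
  - intros a b c f g. apply (ed_faithful Kd). rewrite fmap_cmp, !ed_lift_spec. assoc_l.
    rewrite <- (cmp_assoc (ed_counit_inv Kd b)), ed_counit_inv_r, cmp_idr. reflexivity.
Defined.

Lemma is_equivalence_of_data : is_equivalence K.
Proof.
  exists ed_inverse.
  unshelve eexists (@Build_NT _ _ (Fcomp K ed_inverse) (Fid D) (ed_counit Kd) _).
  { intros a b m; cbn. rewrite ed_lift_spec. assoc_l.
    rewrite ed_counit_inv_r, cmp_idl. reflexivity. }
  unshelve eexists (@Build_NT _ _ (Fcomp ed_inverse K) (Fid C)
                      (fun c => ed_lift Kd (ed_counit Kd (K c))) _).
  { intros a b h; cbn. apply (ed_faithful Kd). rewrite !fmap_cmp, !ed_lift_spec. assoc_l.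
    rewrite ed_counit_inv_r, cmp_idl. reflexivity. }
  split.
  - intro d. exists (ed_counit_inv Kd d). split; [apply ed_counit_inv_l | apply ed_counit_inv_r].
  - intro c; cbn. exists (ed_lift Kd (ed_counit_inv Kd (K c))).
    split; apply (ed_faithful Kd); rewrite fmap_cmp, !ed_lift_spec, fmap_id;
      [apply ed_counit_inv_l | apply ed_counit_inv_r].
Qed.
End EquivalenceDataTheory.

Definition equivalence_data_of_ff_es (C D : Category) (K : Functor C D) :
  fully_faithful K -> ess_surj K -> EquivalenceData K.
Proof.
  intros ff es.
  pose (lift a b (m : hom D (K a) (K b)) :=
          proj1_sig (constructive_indefinite_description _ (ff a b m))).
  pose (iso_of d := constructive_indefinite_description _ (es d)).
  pose (counit d := constructive_indefinite_description _ (proj2_sig (iso_of d))).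
  pose (inv d := constructive_indefinite_description _ (proj2_sig (counit d))).
  refine {| ed_lift := lift; ed_ob d := proj1_sig (iso_of d);
            ed_counit d := proj1_sig (counit d); ed_counit_inv d := proj1_sig (inv d) |}.
  - intros a b m. exact (proj1 (proj2_sig (constructive_indefinite_description _ (ff a b m)))).
  - intros a b f g e. destruct (ff a b (fmap K g)) as [h [_ uniq]].
    rewrite <- (uniq f e), <- (uniq g eq_refl). reflexivity.
  - intro d. exact (proj2 (proj2_sig (inv d))).
  - intro d. exact (proj1 (proj2_sig (inv d))).
Defined.

Lemma faithful_of_iso_nt (C D : Category) (K : Functor C D) (G : Functor D C)
  (be : NT (Fcomp G K) (Fid C)) :
  (forall c, is_iso (ntc be c)) ->
  forall a b (f1 f2 : hom C a b), fmap K f1 = fmap K f2 -> f1 = f2.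
Proof.
  intros be_iso a b f1 f2 e. destruct (be_iso a) as [ai [_ ai_r]]; cbn in ai, ai_r.
  assert (recover : forall f : hom C a b, f = cmp (ntc be b) (cmp (fmap G (fmap K f)) ai)).
  { intro f. pose proof (ntn be f) as n; cbn in n |- *. assoc_l.
    rewrite <- n. assoc_r. rewrite ai_r, cmp_idr. reflexivity. }
  rewrite (recover f1), (recover f2), e. reflexivity.
Qed.

Lemma ff_es_of_equivalence (C D : Category) (K : Functor C D) (G : Functor D C)
  (al : NT (Fcomp K G) (Fid D)) (be : NT (Fcomp G K) (Fid C)) :
  (forall d, is_iso (ntc al d)) -> (forall c, is_iso (ntc be c)) ->
  fully_faithful K /\ ess_surj K.
Proof.
  intros al_iso be_iso. split.
  - intros a b m. destruct (be_iso a) as [ai [ai_l _]], (be_iso b) as [bi [bi_l _]].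
    cbn in ai, bi, ai_l, bi_l.
    pose (f := cmp (ntc be b) (cmp (fmap G m) ai) : hom C a b).
    assert (GKf : fmap G (fmap K f) = cmp bi (cmp f (ntc be a))).
    { pose proof (ntn be f) as n; cbn in n |- *. rewrite n. assoc_l.
      rewrite bi_l, cmp_idl. reflexivity. }
    assert (Kf : fmap K f = m).
    { apply (@faithful_of_iso_nt _ _ G K al al_iso). rewrite GKf.
      unfold f; cbn. assoc_l. rewrite bi_l, cmp_idl. assoc_r. rewrite ai_l. apply cmp_idr. }
    exists f. split; [exact Kf |].
    intros f' Kf'. apply (faithful_of_iso_nt be_iso). rewrite Kf, Kf'. reflexivity.
  - intro d. exists (G d), (ntc al d). apply al_iso.
Qed.

Lemma monadic_iff_ff_es (C D : Category) (U : Functor C D) :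
  monadic U <->
  exists A : LeftAdjoint U, fully_faithful (comparison A) /\ ess_surj (comparison A).
Proof.
  split.
  - intros [A [G [al [be [al_iso be_iso]]]]].
    exists A. exact (ff_es_of_equivalence al_iso be_iso).
  - intros [A [ff es]]. exists A.
    exact (is_equivalence_of_data (equivalence_data_of_ff_es ff es)).
Qed.

Section PreComposition.
Context (C C' D : Category) (H : Functor C C') (Hd : EquivalenceData H)
  (U : Functor C' D) (A : LeftAdjoint U).
Local Notation F := (ladj A).
Local Notation eta d := (ntc (adj_unit A) d).
Local Notation eps c := (ntc (adj_counit A) c).
Local Notation psi := (ed_ob Hd).
Local Notation k x := (ed_counit Hd x).
Local Notation k' x := (ed_counit_inv Hd x).

(* [U o H] has left adjoint [psi o F] with unit [U k' o eta]; its monad is conjugate to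
   that of [U] by [U k], which transports algebras in both directions. *)

Definition pre_unit (d : D) : hom D d (U (H (psi (F d)))) :=
  cmp (fmap U (k' (F d))) (eta d).

Definition pre_transpose (d : D) (c : C) (g : hom D d (U (H c))) : hom C (psi (F d)) c :=
  ed_lift Hd (cmp (cmp (eps (H c)) (fmap F g)) (k (F d))).

Lemma pre_transpose_spec (d : D) (c : C) (g : hom D d (U (H c))) :
  cmp (fmap (Fcomp U H) (pre_transpose g)) (pre_unit d) = g.
Proof.
  unfold pre_transpose, pre_unit; cbn. rewrite ed_lift_spec, !fmap_cmp. assoc_r.
  rewrite (cmp_assoc _ (fmap U (k' (F d)))), (fmap_inverse U (ed_counit_inv_r Hd _)),
    cmp_idl, cmp_assoc, <- fmap_cmp.
  apply adj_transpose_unit.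
Qed.

Lemma pre_transpose_inj (d : D) (c : C) (h1 h2 : hom C (psi (F d)) c) :
  cmp (fmap (Fcomp U H) h1) (pre_unit d) = cmp (fmap (Fcomp U H) h2) (pre_unit d) ->
  h1 = h2.
Proof.
  unfold pre_unit; cbn. intro e. rewrite !cmp_assoc, <- !fmap_cmp in e.
  apply (adj_transpose_inj A) in e. apply (ed_faithful Hd).
  apply (split_epi_cancel (ed_counit_inv_l Hd (F d))). exact e.
Qed.

Definition pre_adjoint : LeftAdjoint (Fcomp U H) :=
  @adjoint_of_universal_arrows _ _ (Fcomp U H) (fun d => psi (F d)) pre_unit pre_transpose
    pre_transpose_spec pre_transpose_inj.

Lemma pre_counit (c : C) :
  fmap H (ntc (adj_counit pre_adjoint) c) = cmp (eps (H c)) (k (F (U (H c)))).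
Proof. cbn. unfold pre_transpose. rewrite ed_lift_spec, fmap_id, cmp_idr. reflexivity. Qed.

Lemma pre_fmap_adjoint (d1 d2 : D) (m : hom D d1 d2) :
  fmap H (fmap (ladj pre_adjoint) m) = cmp (k' (F d2)) (cmp (fmap F m) (k (F d1))).
Proof.
  cbn. unfold pre_transpose. rewrite ed_lift_spec, cmp_assoc. f_equal.
  apply (adj_transpose_inj A). rewrite adj_transpose_unit. unfold pre_unit.
  rewrite fmap_cmp. assoc_r. pose proof (ntn (adj_unit A) m) as n; cbn in n |- *.
  rewrite n. reflexivity.
Qed.

Lemma pre_counit_UH (c : C) :
  fmap (Fcomp U H) (ntc (adj_counit pre_adjoint) c)
  = cmp (fmap U (eps (H c))) (fmap U (k (F (U (H c))))).
Proof. rewrite <- fmap_cmp, <- pre_counit. reflexivity. Qed.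

Lemma pre_comparison_act (c : C) :
  aact (comparison pre_adjoint c)
  = cmp (fmap U (eps (H c))) (fmap U (k (F (U (H c))))).
Proof. exact (pre_counit_UH c). Qed.

Lemma pre_fmap_monad (d1 d2 : D) (m : hom D d1 d2) :
  fmap (Fcomp U H) (fmap (ladj pre_adjoint) m)
  = cmp (fmap U (k' (F d2))) (cmp (fmap U (fmap F m)) (fmap U (k (F d1)))).
Proof. rewrite <- !fmap_cmp, <- pre_fmap_adjoint. reflexivity. Qed.

Lemma pre_comparison_hom (a b : C)
  (m : AlgHom (comparison pre_adjoint a) (comparison pre_adjoint b)) :
  cmp (proj1_sig m) (fmap U (eps (H a)))
  = cmp (fmap U (eps (H b))) (fmap U (fmap F (proj1_sig m))).
Proof.
  destruct m as [m m_alg]; cbn [proj1_sig].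
  rewrite pre_fmap_monad, !pre_comparison_act in m_alg.
  apply (split_epi_cancel (fmap_inverse U (ed_counit_inv_r Hd (F (U (H a)))))).
  cbn in m, m_alg |- *. rewrite <- cmp_assoc, m_alg. assoc_l.
  rewrite (cmp_assoc_eq _ (fmap_inverse U (ed_counit_inv_r Hd _))), cmp_idr. reflexivity.
Qed.

Lemma pre_comparison_ff :
  fully_faithful (comparison A) -> fully_faithful (comparison pre_adjoint).
Proof.
  intros Kff a b m.
  pose (m' := exist _ (proj1_sig m) (pre_comparison_hom m)
              : hom (EMcat A) (comparison A (H a)) (comparison A (H b))).
  destruct (Kff _ _ m') as [g [g_spec g_uniq]].
  exists (ed_lift Hd g). split.
  - apply sig_eq_pi; cbn. rewrite ed_lift_spec. exact (f_equal (@proj1_sig _ _) g_spec).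
  - intros f f_spec. apply (ed_faithful Hd). rewrite ed_lift_spec. apply g_uniq.
    apply sig_eq_pi; cbn. exact (f_equal (@proj1_sig _ _) f_spec).
Qed.

Lemma pre_alg_act_transfer (x : Alg pre_adjoint) :
  cmp (cmp (aact x) (fmap U (k' (F (acar x))))) (fmap U (fmap F (aact x)))
  = cmp (aact x) (fmap U (eps (H (psi (F (acar x)))))).
Proof.
  pose proof (alg_assoc x) as x_assoc.
  rewrite pre_fmap_monad, pre_counit_UH in x_assoc.
  apply (split_epi_cancel (fmap_inverse U (ed_counit_inv_r Hd (F (U (H (psi (F (acar x))))))))).
  cbn in x_assoc |- *. assoc_r. exact x_assoc.
Qed.

Definition pre_alg_transfer (x : Alg pre_adjoint) : Alg A.
Proof.
  refine (@Build_Alg _ _ U A (acar x) (cmp (aact x) (fmap U (k' (F (acar x))))) _ _).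
  - rewrite <- cmp_assoc. exact (alg_unit x).
  - rewrite !fmap_cmp. assoc_l. rewrite pre_alg_act_transfer. assoc_r.
    f_equal. symmetry. exact (counit_natural_U A (k' (F (acar x)))).
Defined.

Lemma pre_alg_hom_of_transfer_spec (c : C') (x : Alg pre_adjoint)
  (j : AlgHom (comparison A c) (pre_alg_transfer x)) :
  cmp (cmp (proj1_sig j) (fmap U (k c))) (aact (comparison pre_adjoint (psi c)))
  = cmp (aact x) (fmap (Fcomp U H) (fmap (ladj pre_adjoint) (cmp (proj1_sig j) (fmap U (k c))))).
Proof.
  destruct j as [j j_alg]; cbn [proj1_sig] in j_alg |- *.
  rewrite pre_fmap_monad, pre_comparison_act. cbn in j, j_alg |- *.
  assoc_r. rewrite (cmp_assoc (fmap U (k (F (U (H (psi c))))))), (counit_natural_U A (k c)).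
  rewrite !fmap_cmp. assoc_l. rewrite j_alg. reflexivity.
Qed.

Definition pre_alg_hom_of_transfer (c : C') (x : Alg pre_adjoint)
  (j : AlgHom (comparison A c) (pre_alg_transfer x)) :
  AlgHom (comparison pre_adjoint (psi c)) x :=
  exist _ (cmp (proj1_sig j) (fmap U (k c))) (pre_alg_hom_of_transfer_spec j).

Lemma pre_comparison_es : ess_surj (comparison A) -> ess_surj (comparison pre_adjoint).
Proof.
  intros Kes x. destruct (Kes (pre_alg_transfer x)) as [c [j [ji [ji_j j_ji]]]].
  apply (f_equal (@proj1_sig _ _)) in ji_j, j_ji.
  exists (psi c), (pre_alg_hom_of_transfer j).
  apply em_iso_of_inverse with (cmp (fmap U (k' c)) (proj1_sig ji)); cbn in *.
  - exact (cmp_inverse (fmap_inverse U (ed_counit_inv_l Hd c)) ji_j).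
  - exact (cmp_inverse j_ji (fmap_inverse U (ed_counit_inv_r Hd c))).
Qed.
End PreComposition.

Lemma monadic_comp_equivalence_r (C C' D : Category) (H : Functor C C') (U : Functor C' D) :
  EquivalenceData H -> monadic U -> monadic (Fcomp U H).
Proof.
  intros Hd HU. apply monadic_iff_ff_es.
  destruct (proj1 (monadic_iff_ff_es U) HU) as [A [Kff Kes]]. exists (pre_adjoint Hd A).
  split; [apply pre_comparison_ff | apply pre_comparison_es]; assumption.
Qed.

Section PostComposition.
Context (C D' D : Category) (E : Functor D' D) (Ed : EquivalenceData E)
  (V : Functor C D') (A : LeftAdjoint V).
Local Notation F := (ladj A).
Local Notation eta d := (ntc (adj_unit A) d).
Local Notation eps c := (ntc (adj_counit A) c).
Local Notation phi := (ed_ob Ed).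
Local Notation u d := (ed_counit Ed d).
Local Notation u' d := (ed_counit_inv Ed d).
Local Notation lift g := (ed_lift Ed g).

(* [E o V] has left adjoint [F o phi] with unit [E eta o u']; algebras of its monad on [d]
   correspond to [V]-algebras on [phi d]. *)

Definition post_unit (d : D) : hom D d (E (V (F (phi d)))) :=
  cmp (fmap E (eta (phi d))) (u' d).

Definition post_transpose (d : D) (c : C) (g : hom D d (E (V c))) : hom C (F (phi d)) c :=
  cmp (eps c) (fmap F (lift (cmp g (u d)))).

Lemma post_transpose_spec (d : D) (c : C) (g : hom D d (E (V c))) :
  cmp (fmap (Fcomp E V) (post_transpose g)) (post_unit d) = g.
Proof.
  unfold post_transpose, post_unit; cbn. rewrite cmp_assoc, <- fmap_cmp.
  rewrite (adj_transpose_unit A), ed_lift_spec, <- cmp_assoc, ed_counit_inv_r.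
  apply cmp_idr.
Qed.

Lemma post_transpose_inj (d : D) (c : C) (h1 h2 : hom C (F (phi d)) c) :
  cmp (fmap (Fcomp E V) h1) (post_unit d) = cmp (fmap (Fcomp E V) h2) (post_unit d) ->
  h1 = h2.
Proof.
  unfold post_unit; cbn. intro e. rewrite !cmp_assoc in e.
  apply (split_epi_cancel (ed_counit_inv_l Ed d)) in e.
  rewrite <- !fmap_cmp in e. apply (ed_faithful Ed), (adj_transpose_inj A) in e. exact e.
Qed.

Definition post_adjoint : LeftAdjoint (Fcomp E V) :=
  @adjoint_of_universal_arrows _ _ (Fcomp E V) (fun d => F (phi d)) post_unit post_transpose
    post_transpose_spec post_transpose_inj.

Lemma post_counit (c : C) :
  ntc (adj_counit post_adjoint) c = cmp (eps c) (fmap F (lift (u (E (V c))))).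
Proof. cbn. unfold post_transpose. rewrite cmp_idl. reflexivity. Qed.

Lemma post_fmap_adjoint (d1 d2 : D) (m : hom D d1 d2) :
  fmap (ladj post_adjoint) m = fmap F (lift (cmp (u' d2) (cmp m (u d1)))).
Proof.
  cbn. unfold post_transpose, post_unit.
  transitivity (cmp (eps (F (phi d2)))
                  (fmap F (cmp (eta (phi d2)) (lift (cmp (u' d2) (cmp m (u d1))))))).
  { do 2 f_equal. apply (ed_faithful Ed). rewrite fmap_cmp, !ed_lift_spec. assoc_l.
    reflexivity. }
  rewrite fmap_cmp, cmp_assoc.
  pose proof (adj_tri1 A (phi d2)) as t; cbn in t |- *. rewrite t. apply cmp_idl.
Qed.

Lemma post_counit_EV (c : C) :
  fmap (Fcomp E V) (ntc (adj_counit post_adjoint) c)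
  = cmp (fmap E (fmap V (eps c))) (fmap E (fmap V (fmap F (lift (u (E (V c))))))).
Proof. rewrite <- !fmap_cmp, <- post_counit. reflexivity. Qed.

Lemma post_comparison_act (c : C) :
  aact (comparison post_adjoint c)
  = cmp (fmap E (fmap V (eps c))) (fmap E (fmap V (fmap F (lift (u (E (V c))))))).
Proof. exact (post_counit_EV c). Qed.

Lemma post_fmap_monad (d1 d2 : D) (m : hom D d1 d2) :
  fmap (Fcomp E V) (fmap (ladj post_adjoint) m)
  = fmap E (fmap V (fmap F (lift (cmp (u' d2) (cmp m (u d1)))))).
Proof. rewrite <- post_fmap_adjoint. reflexivity. Qed.

Lemma fmap_EVF_lift_counit_inv (x : D') :
  cmp (fmap E (fmap V (fmap F (lift (u (E x))))))
      (fmap E (fmap V (fmap F (lift (u' (E x)))))) = idm _.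
Proof. exact (fmap_inverse E (fmap_inverse V (fmap_inverse F (ed_lift_counit_inv Ed x)))). Qed.

Lemma post_comparison_hom (a b : C)
  (m : AlgHom (comparison post_adjoint a) (comparison post_adjoint b)) :
  cmp (lift (proj1_sig m)) (fmap V (eps a))
  = cmp (fmap V (eps b)) (fmap V (fmap F (lift (proj1_sig m)))).
Proof.
  destruct m as [m m_alg]; cbn [proj1_sig].
  rewrite post_fmap_monad, !post_comparison_act in m_alg. cbn in m, m_alg |- *.
  apply (ed_faithful Ed). rewrite !fmap_cmp, ed_lift_spec.
  apply (split_epi_cancel (fmap_EVF_lift_counit_inv (V a))).
  rewrite <- cmp_assoc, m_alg. assoc_r. f_equal.
  rewrite <- !fmap_cmp, ed_lift_conj. reflexivity.
Qed.

Lemma post_comparison_ff :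
  fully_faithful (comparison A) -> fully_faithful (comparison post_adjoint).
Proof.
  intros Kff a b m.
  pose (m' := exist _ (lift (proj1_sig m)) (post_comparison_hom m)
              : hom (EMcat A) (comparison A a) (comparison A b)).
  destruct (Kff _ _ m') as [g [g_spec g_uniq]].
  exists g. split.
  - apply sig_eq_pi. apply (f_equal (@proj1_sig _ _)) in g_spec. cbn in g_spec |- *.
    rewrite g_spec. apply ed_lift_spec.
  - intros f f_spec. apply g_uniq, sig_eq_pi; cbn. apply (ed_faithful Ed).
    rewrite ed_lift_spec. exact (f_equal (@proj1_sig _ _) f_spec).
Qed.

Lemma post_alg_act_transfer (x : Alg post_adjoint) :
  cmp (aact x) (fmap E (fmap V (fmap F (lift (cmp (u' (acar x)) (aact x))))))
  = cmp (aact x) (fmap E (fmap V (eps (F (phi (acar x)))))).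
Proof.
  pose proof (alg_assoc x) as x_assoc.
  rewrite post_fmap_monad, post_counit_EV in x_assoc. cbn in x_assoc |- *.
  rewrite cmp_assoc, ed_lift_cmp, !fmap_cmp in x_assoc.
  apply (split_epi_cancel (fmap_EVF_lift_counit_inv (V (F (phi (acar x)))))).
  assoc_r. exact x_assoc.
Qed.

Definition post_alg_transfer (x : Alg post_adjoint) : Alg A.
Proof.
  refine (@Build_Alg _ _ V A (phi (acar x)) (lift (cmp (u' (acar x)) (aact x))) _ _).
  - apply (ed_faithful Ed). rewrite fmap_cmp, ed_lift_spec, fmap_id.
    apply (split_epi_cancel (ed_counit_inv_l Ed (acar x))).
    pose proof (alg_unit x) as x_unit; cbn in x_unit |- *. unfold post_unit in x_unit.
    assoc_r. transitivity (cmp (u' (acar x)) (idm (acar x))); [f_equal; exact x_unit |].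
    rewrite cmp_idr. symmetry. apply cmp_idl.
  - apply (ed_faithful Ed). rewrite !fmap_cmp, ed_lift_spec. assoc_r. f_equal.
    exact (post_alg_act_transfer x).
Defined.

Lemma post_alg_hom_of_transfer_spec (c : C) (x : Alg post_adjoint)
  (j : AlgHom (comparison A c) (post_alg_transfer x)) :
  cmp (cmp (u (acar x)) (fmap E (proj1_sig j))) (aact (comparison post_adjoint c))
  = cmp (aact x)
      (fmap (Fcomp E V) (fmap (ladj post_adjoint) (cmp (u (acar x)) (fmap E (proj1_sig j))))).
Proof.
  destruct j as [j j_alg]; cbn [proj1_sig] in j_alg |- *.
  rewrite post_comparison_act, post_fmap_monad. cbn in j, j_alg |- *.
  assert (lift_j : lift (cmp (u' (acar x)) (cmp (cmp (u (acar x)) (fmap E j)) (u (E (V c)))))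
                   = cmp j (lift (u (E (V c))))).
  { apply (ed_faithful Ed). rewrite !fmap_cmp, !ed_lift_spec. assoc_l.
    rewrite ed_counit_inv_l, cmp_idl. reflexivity. }
  apply (f_equal (fmap E)) in j_alg. rewrite !fmap_cmp, ed_lift_spec in j_alg.
  rewrite lift_j, !fmap_cmp. assoc_r.
  rewrite (cmp_assoc (fmap E (fmap V (fmap F (lift (u (E (V c))))))) _ (fmap E j)), j_alg.
  assoc_l. rewrite ed_counit_inv_r, cmp_idl. reflexivity.
Qed.

Definition post_alg_hom_of_transfer (c : C) (x : Alg post_adjoint)
  (j : AlgHom (comparison A c) (post_alg_transfer x)) :
  AlgHom (comparison post_adjoint c) x :=
  exist _ (cmp (u (acar x)) (fmap E (proj1_sig j))) (post_alg_hom_of_transfer_spec j).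

Lemma post_comparison_es : ess_surj (comparison A) -> ess_surj (comparison post_adjoint).
Proof.
  intros Kes x. destruct (Kes (post_alg_transfer x)) as [c [j [ji [ji_j j_ji]]]].
  apply (f_equal (@proj1_sig _ _)) in ji_j, j_ji.
  exists c, (post_alg_hom_of_transfer j).
  apply em_iso_of_inverse with (cmp (fmap E (proj1_sig ji)) (u' (acar x))); cbn in *.
  - exact (cmp_inverse (fmap_inverse E ji_j) (ed_counit_inv_l Ed _)).
  - exact (cmp_inverse (ed_counit_inv_r Ed _) (fmap_inverse E j_ji)).
Qed.
End PostComposition.

Lemma monadic_comp_equivalence_l (C D' D : Category) (E : Functor D' D) (V : Functor C D') :
  EquivalenceData E -> monadic V -> monadic (Fcomp E V).
Proof.
  intros Ed HV. apply monadic_iff_ff_es.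
  destruct (proj1 (monadic_iff_ff_es V) HV) as [A [Kff Kes]]. exists (post_adjoint Ed A).
  split; [apply post_comparison_ff | apply post_comparison_es]; assumption.
Qed.

Lemma functor_eq_of_fmap (C D : Category) (o : C -> D)
  (m1 m2 : forall a b, hom C a b -> hom D (o a) (o b)) p1 q1 p2 q2 :
  (forall a b f, m1 a b f = m2 a b f) ->
  Build_Functor C D o m1 p1 q1 = Build_Functor C D o m2 p2 q2.
Proof.
  intro e.
  assert (m1 = m2) as <-.
  { do 2 (apply functional_extensionality_dep; intro).
    apply functional_extensionality; intro. apply e. }
  f_equal; apply proof_irrelevance.
Qed.

Section StrictInitial.
Context (X : Category) (z : X) (Hz : is_strict_initial z).

Definition initial_arrow (x : X) : hom X z x :=
  proj1_sig (constructive_indefinite_description _ (proj1 Hz x)).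

Lemma initial_arrow_unique (x : X) (f g : hom X z x) : f = g.
Proof. destruct (proj1 Hz x) as [f0 uniq]. rewrite (uniq f), (uniq g). reflexivity. Qed.

Lemma hom_unique_of_hom_to_initial (x y : X) (h : hom X x z) (f g : hom X x y) : f = g.
Proof.
  destruct (proj2 Hz x h) as [hi [hi_h _]].
  rewrite <- (cmp_idr f), <- (cmp_idr g), <- hi_h, !cmp_assoc. f_equal.
  apply initial_arrow_unique.
Qed.

Lemma lhom_eq_of_functor_eq (V W : LObj X) (h1 h2 : LHom V W) :
  lf h1 = lf h2 -> (forall w y (g1 g2 : hom X (la V w) y), g1 = g2) -> h1 = h2.
Proof.
  destruct h1 as [f1 g1], h2 as [f2 g2]; cbn. intros <- uniq.
  f_equal. apply nt_eq. intro; apply uniq.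
Qed.

Lemma label_over_L_hom_unique (W : Category) (s : SObj (C:=CatLax X) (Lobj z W)) w y
  (g1 g2 : hom X (la (sdom s) w) y) : g1 = g2.
Proof. exact (hom_unique_of_hom_to_initial (ntc (lg (sarr s)) w) g1 g2). Qed.

Lemma Lmor_comp (W1 W2 W3 : Category) (k1 : Functor W1 W2) (k2 : Functor W2 W3)
  (k3 : Functor W1 W3) :
  Fcomp k2 k1 = k3 -> cmp (C:=CatLax X) (Lmor z k2) (Lmor z k1) = Lmor z k3.
Proof. intro e. apply lhom_eq_of_functor_eq; [exact e | intros; apply initial_arrow_unique]. Qed.

Definition lhom_from_L (Z : Category) (V : LObj X) (k : Functor Z (lW V)) :
  LHom (Lobj z Z) V :=
  @Build_LHom X (Lobj z Z) V k
    (@Build_NT _ _ (constF Z z) (Fcomp (la V) k) (fun w => initial_arrow _)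
       (fun _ _ _ => initial_arrow_unique _ _)).

Definition slice_forget (W : Category) :
  Functor (Slice (C:=CatLax X) (Lobj z W)) (Slice (C:=Cat) W).
Proof.
  refine (Build_Functor (Slice (C:=CatLax X) (Lobj z W)) (Slice (C:=Cat) W)
            (fun s => Build_SObj (C:=Cat) (v:=W) (lW (sdom s)) (lf (sarr s)))
            (fun s t (h : SHom s t) =>
               exist _ (lf (proj1_sig h)) (f_equal (@lf _ _ _) (proj2_sig h))) _ _);
    intros; apply sig_eq_pi; reflexivity.
Defined.

Definition slice_L (W : Category) :
  Functor (Slice (C:=Cat) W) (Slice (C:=CatLax X) (Lobj z W)).
Proof.
  refine (Build_Functor (Slice (C:=Cat) W) (Slice (C:=CatLax X) (Lobj z W))
            (fun s => Build_SObj (C:=CatLax X) (v:=Lobj z W) (Lobj z (sdom s)) (Lmor z (sarr s)))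
            (fun s t (h : SHom s t) => exist _ (Lmor z (proj1_sig h)) (Lmor_comp (proj2_sig h)))
            _ _);
    intros; apply sig_eq_pi, lhom_eq_of_functor_eq;
    solve [reflexivity | intros; apply initial_arrow_unique].
Defined.

Definition slice_L_equivalence (W : Category) : EquivalenceData (slice_L W).
Proof.
  pose (label_to (s : SObj (C:=CatLax X) (Lobj z W)) :=
          @Build_LHom X (Lobj z (lW (sdom s))) (sdom s) (Fid _)
            (@Build_NT _ _ (constF _ z) (Fcomp (la (sdom s)) (Fid _))
               (fun w => initial_arrow (la (sdom s) w)) (fun _ _ _ => initial_arrow_unique _ _))).
  pose (label_from (s : SObj (C:=CatLax X) (Lobj z W)) :=
          @Build_LHom X (sdom s) (Lobj z (lW (sdom s))) (Fid _)
            (@Build_NT _ _ (la (sdom s)) (Fcomp (constF _ z) (Fid _)) (ntc (lg (sarr s)))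
               (fun _ _ _ => label_over_L_hom_unique _ _))).
  unshelve refine (@Build_EquivalenceData _ _ (slice_L W)
    (fun a b g => fmap (slice_forget W) g) _ _ (fun s => slice_forget W s)
    (fun s => exist _ (label_to s) _) (fun s => exist _ (label_from s) _) _ _).
  - cbn. apply lhom_eq_of_functor_eq;
      [apply (cmp_idr (C:=Cat)) | intros; apply initial_arrow_unique].
  - cbn. apply lhom_eq_of_functor_eq;
      [apply (cmp_idr (C:=Cat)) | intros; apply label_over_L_hom_unique].
  - intros a b g. apply sig_eq_pi, lhom_eq_of_functor_eq;
      [reflexivity | intros; apply initial_arrow_unique].
  - intros a b f g e. apply sig_eq_pi. exact (f_equal (fun h => lf (proj1_sig h)) e).
  - intro s. apply sig_eq_pi, lhom_eq_of_functor_eq;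
      [apply (cmp_idl (C:=Cat)) | intros; apply label_over_L_hom_unique].
  - intro s. apply sig_eq_pi, lhom_eq_of_functor_eq;
      [apply (cmp_idl (C:=Cat)) | intros; apply initial_arrow_unique].
Defined.

Definition slice_forget_equivalence (W : Category) : EquivalenceData (slice_forget W).
Proof.
  unshelve refine (@Build_EquivalenceData _ _ (slice_forget W)
    (fun a b g => exist _ (@Build_LHom X (sdom a) (sdom b) (proj1_sig g)
                             (@Build_NT _ _ (la (sdom a)) (Fcomp (la (sdom b)) (proj1_sig g))
                                (fun w => cmp (initial_arrow _) (ntc (lg (sarr a)) w))
                                (fun _ _ _ => label_over_L_hom_unique _ _))) _)
    _ _ (fun s => slice_L W s) (fun s => idm s) (fun s => idm s) _ _).
  - apply lhom_eq_of_functor_eq; [exact (proj2_sig g) | intros; apply label_over_L_hom_unique].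
  - intros a b g. apply sig_eq_pi. reflexivity.
  - intros a b f g e. apply sig_eq_pi, lhom_eq_of_functor_eq.
    + exact (f_equal (@proj1_sig _ _) e).
    + intros; apply label_over_L_hom_unique.
  - intro s. apply cmp_idl.
  - intro s. apply cmp_idl.
Defined.

Section Pullbacks.
Context (E B : Category) (p : Functor E B) (PL : PullbacksAlong (Lmor z p)).

Lemma Lmor_square (W Z : Category) (g : Functor W B) (x : Functor Z E) (y : Functor Z W) :
  cmp (C:=Cat) p x = cmp (C:=Cat) g y ->
  cmp (C:=CatLax X) (Lmor z p) (Lmor z x) = cmp (Lmor z g) (Lmor z y).
Proof. intro e. apply lhom_eq_of_functor_eq; [exact e | intros; apply initial_arrow_unique]. Qed.

Definition cat_pullbacks : PullbacksAlong (C:=Cat) (u:=E) (v:=B) p.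
Proof.
  unshelve refine (@Build_PullbacksAlong Cat E B p
    (fun W g => lW (pb_ob PL (Lmor z g)))
    (fun W g => lf (pb_pr1 PL (Lmor z g)))
    (fun W g => lf (pb_pr2 PL (Lmor z g))) _
    (fun W g Z x y e => lf (pb_lift PL (Lmor z g) (Lmor z x) (Lmor z y) (Lmor_square e)))
    _ _ _).
  - intros W g. exact (f_equal (@lf _ _ _) (pb_sq PL (Lmor z g))).
  - intros W g Z x y e.
    exact (f_equal (@lf _ _ _) (pb_lift1 PL (Lmor z g) (Lmor z x) (Lmor z y) (Lmor_square e))).
  - intros W g Z x y e.
    exact (f_equal (@lf _ _ _) (pb_lift2 PL (Lmor z g) (Lmor z x) (Lmor z y) (Lmor_square e))).
  - intros W g Z k k' e1 e2.
    refine (f_equal (@lf _ _ _) (pb_uniq PL (Lmor z g) (lhom_from_L k) (lhom_from_L k') _ _));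
      apply lhom_eq_of_functor_eq; solve [assumption | intros; apply initial_arrow_unique].
Defined.

Lemma pbfun_factor :
  pbfun cat_pullbacks = Fcomp (slice_forget E) (Fcomp (pbfun PL) (slice_L B)).
Proof.
  refine (functor_eq_of_fmap _ _ _ _ _). intros a b h. apply sig_eq_pi.
  apply (pb_uniq cat_pullbacks (sarr b)).
  - rewrite (pbf_lift1 cat_pullbacks h).
    symmetry. exact (f_equal (@lf _ _ _) (pbf_lift1 PL (fmap (slice_L B) h))).
  - rewrite (pbf_lift2 cat_pullbacks h).
    symmetry. exact (f_equal (@lf _ _ _) (pbf_lift2 PL (fmap (slice_L B) h))).
Qed.
End Pullbacks.
End StrictInitial.

Unset Implicit Arguments.
Unset Universe Polymorphism.

Theorem mainTheorem11 (X : Category) (z : X) (E B : Category) (p : Functor E B) :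
  is_strict_initial z ->
  effective_descent (C := CatLax X) (Lmor z p) ->
  effective_descent (C := Cat) (p : hom Cat E B).
Proof.
  intros Hz [PL PL_monadic]. exists (cat_pullbacks Hz PL).
  rewrite (pbfun_factor Hz PL).
  apply (monadic_comp_equivalence_l (slice_forget_equivalence Hz E)).
  exact (monadic_comp_equivalence_r (slice_L_equivalence Hz B) PL_monadic).
Qed.
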